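(* Let $G$ be an infinite vertex-transitive graph of finite degree, let $K\subset V(G)$ be finite, let $y\in K$, and let $\sigma=(\tilde\eta^o_0,\tilde\eta^w_0)$ be an unstable particle configuration. Then for the ghost-pair stabilization of $K$ started from $\sigma$, \[ \tilde E_{K,\sigma}\bigl(\tilde m(y)\bigr)=\sum_{x\in K}\bigl(\tilde\eta^o_0(x)\wedge\tilde\eta^w_0(x)\bigr)\,G_K(x,y). \]
   Context: A particle configuration $(\eta^o,\eta^w)\in\mathbb{N}^{V(G)}\times\mathbb{N}^{V(G)}$ gives the numbers of oils and waters at each vertex; $x$ is stable if $\eta^o(x)\wedge\eta^w(x)=0$, and $\eta^o(x)\wedge\eta^w(x)$ is the number of (oil-water) pairs at $x$; $x$ is a hole if $\eta^o(x)=\eta^w(x)$. Ghost-pair stabilization of $K$: states are triples $(\tilde\eta^o,\tilde\eta^w,\tilde\eta^g)$, the last coordinate counting auxiliary particles called ghosts. Start with oils and waters as in $\sigma$ and no ghosts. At each step $t=0,1,2,\dots$: (i) either one ghost located at a vertex of $K$ makes one simple random walk step, or one oil-water pair at a vertex $b\in K$ (i.e. $b$ has at least one oil and one water) moves, meaning one oil and one water at $b$ each independently jump to a uniformly chosen neighbor of $b$; the choice of which ghost or pair moves is arbitrary (may depend on the past); (ii) if in (i) a water jumped into a vertex $x\in K$ which was a hole just before this step and after the step $x$ has exactly one more water than oils, a new ghost is created at $x$. Ghosts do not interact with oils, waters, or each other. The procedure stops at the first time $T$ at which $K$ is stable for oils and waters and no ghost is in $K$ ($T$ is a.s. finite). $\tilde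 m(y)$ is the total number of times that a ghost or an oil-water pair jumps from $y$, and $\tilde P_{K,\sigma},\tilde E_{K,\sigma}$ denote the law and expectation of this procedure. $G_K(x,y)=E_x\bigl[\sum_{t=0}^{\tau_{K^c}}\mathbf{1}\{X(t)=y\}\bigr]$, where $X$ is simple random walk on $G$ started at $x$ and $\tau_{K^c}=\inf\{t\ge0:X(t)\notin K\}$. *)

From mathcomp Require Import all_boot all_order all_algebra.
From mathcomp Require Import all_classical all_reals all_analysis.
Set Implicit Arguments. Unset Strict Implicit. Unset Printing Implicit Defensive.
Import Order.TTheory GRing.Theory Num.Theory.
Local Open Scope ring_scope.

Section Defs.
Variable V : eqType.
(* A locally finite simple graph is given by its (duplicate-free) neighbour lists. *)
Variable adj : V -> seq V.

Definition graph_simple : Prop :=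
  (forall v, uniq (adj v)) /\ (forall v, v \notin adj v) /\
  (forall u v, (v \in adj u) = (u \in adj v)).

Definition graph_connected : Prop :=
  forall x y : V, exists p : seq V,
    path (fun a b => b \in adj a) x p /\ last x p = y.

Definition graph_infinite : Prop := ~ exists s : seq V, forall v : V, v \in s.

Definition vertex_transitive : Prop :=
  forall x y : V, exists f : V -> V,
    bijective f /\ (forall u v, (v \in adj u) = (f v \in adj (f u))) /\ f x = y.

Definition deg (v : V) : nat := size (adj v).

(* choice made at a step: move a ghost from v, or move a pair from v *)
Inductive gpchoice := Ghost of V | Pair of V.
(* realized step: GStep from to ; PStep from oil_to water_to *)
Inductive gpstep := GStep of V & V | PStep of V & V & V.

Definition origin (c : gpchoice) : V := match c with Ghost v => v | Pair v => v end.

(* state: (oils, waters, ghosts) *)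
Definition pstate := ((V -> nat) * (V -> nat) * (V -> nat))%type.

Definition upd (f : V -> nat) (v : V) (g : nat -> nat) : V -> nat :=
  fun x => if x == v then g (f x) else f x.

Variable K : seq V.

Definition apply_step (st : pstate) (x : gpstep) : pstate :=
  let: (eo, ew, eg) := st in
  match x with
  | GStep a b => (eo, ew, upd (upd eg a predn) b succn)
  | PStep b u w =>
      let eo1 := upd (upd eo b predn) u succn in
      let ew1 := upd (upd ew b predn) w succn in
      let newghost :=
        [&& w \in K, eo w == ew w & ew1 w == (eo1 w).+1] in
      (eo1, ew1, if newghost then upd eg w succn else eg)
  end.

Variables (so sw : V -> nat).

(* histories are stored newest step first *)
Definition state_of (h : seq gpstep) : pstate :=
  foldr (fun x st => apply_step st x) (so, sw, fun _ => 0%N) h.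

Definition terminal (st : pstate) : bool :=
  let: (eo, ew, eg) := st in
  all (fun x => (minn (eo x) (ew x) == 0%N) && (eg x == 0%N)) K.

Definition valid_choice (st : pstate) (c : gpchoice) : bool :=
  let: (eo, ew, eg) := st in
  match c with
  | Ghost v => (v \in K) && (0 < eg v)%N
  | Pair v => [&& v \in K, (0 < eo v)%N & (0 < ew v)%N]
  end.

Definition options (c : gpchoice) : seq gpstep :=
  match c with
  | Ghost v => [seq GStep v u | u <- adj v]
  | Pair v => [seq PStep v u w | u <- adj v, w <- adj v]
  end.

Variable strat : seq gpstep -> gpchoice.

Fixpoint hist (n : nat) : seq (seq gpstep) :=
  match n with
  | 0 => [:: [::]]
  | n'.+1 => flatten [seq [seq x :: h | x <- options (strat h)]
                     | h <- hist n' & ~~ terminal (state_of h)]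
  end.

Definition valid_strategy : Prop :=
  forall n, all (fun h => terminal (state_of h) || valid_choice (state_of h) (strat h))
                (hist n).

Variable R : realType.

Definition step_weight (x : gpstep) : R :=
  match x with
  | GStep a _ => (deg a)%:R^-1
  | PStep a _ _ => ((deg a)%:R ^+ 2)^-1
  end.

Definition hist_prob (h : seq gpstep) : R := \prod_(x <- h) step_weight x.

(* tilde E (tilde m(y)) = sum_t P(t < T and the move at time t is from y) *)
Definition expected_jumps_from (y : V) : \bar R :=
  (\sum_(0 <= n <oo)
     (\sum_(h <- hist n | ~~ terminal (state_of h) && (origin (strat h) == y))
        hist_prob h)%:E)%E.

(* q n x y = P_x(X(n) = y, n <= tau_{K^c}) for simple random walk X *)
Fixpoint killed_prob (n : nat) (x y : V) : R :=
  match n with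
  | 0 => (x == y)%:R
  | n'.+1 => if x \in K then (deg x)%:R^-1 * \sum_(u <- adj x) killed_prob n' u y
             else 0
  end.

(* G_K(x,y) = E_x[ sum_{t=0}^{tau} 1{X(t)=y} ] = sum_t P_x(X(t)=y, t <= tau) *)
Definition greenK (x y : V) : \bar R :=
  (\sum_(0 <= n <oo) (killed_prob n x y)%:E)%E.

End Defs.

(* Call the oil-water pairs and the ghosts at a vertex its walkers.  A ghost
   makes a simple random walk step.  When a pair at b moves, its oil creates a
   pair at u iff u had more waters than oils, and its water creates a pair or
   a ghost at w iff w had at least as many waters as oils; so on average the
   move puts exactly one walker at a uniform neighbour of b.  Hence, for f
   vanishing off K, the potential sum_x walkers(x) f(x) changes in expectation
   by (P f - f)(b) at a move from b, P being the neighbour average.  Taking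
   f = G_K(., y), which satisfies f = 1_y + P f on K, the expected drop of the
   potential at step n is the probability that the n-th move is from y, so
   E m(y) is the initial potential sum_x (pairs at x) G_K(x, y) minus the
   limit of its expectation.  That limit is 0: for the expected exit time
   g = sum_z G_K(., z), with g = 1 + P g on K, the expected g-potential A_n is
   nonincreasing and, with B_n the expected square of the g-potential,
   B_{n+1} + C A_{n+1} <= B_n + C A_n - 2 A_n, so n A_n stays bounded.
   G_K is finite because from every point of the finite set K the walk leaves
   K within a fixed time with probability bounded below, G being connected
   and infinite. *)

From mathcomp Require Import all_boot all_order all_algebra.
From mathcomp Require Import all_classical all_reals all_analysis.
From mathcomp Require Import ring lra zify.
Import Order.TTheory GRing.Theory Num.Theory.
Set Implicit Arguments. Unset Strict Implicit. Unset Printing Implicit Defensive.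
Local Open Scope ring_scope.

Lemma sum_indicator_seq (R : pzRingType) (V : eqType) (r : seq V) (g : V -> R) a :
  uniq r -> \sum_(x <- r) (x == a)%:R * g x = (a \in r)%:R * g a.
Proof.
move=> ur; case ar: (a \in r); last first.
  rewrite mul0r big1_seq // => x /andP[_ xr].
  by case: eqP => [xa|_]; [rewrite -xa xr in ar | rewrite mul0r].
rewrite (bigD1_seq a) //= eqxx mul1r big1 ?addr0 // => x /negbTE ->.
by rewrite mul0r.
Qed.

Lemma sumr_const_seq (R : nmodType) (I : Type) (r : seq I) (c : R) :
  \sum_(i <- r) c = c *+ size r.
Proof. by rewrite big_const_seq count_predT iter_addr addr0. Qed.

Lemma eq_big_all (R : Type) (idx : R) (op : R -> R -> R) (I : Type) (r : seq I)
    (P Q : pred I) (F G : I -> R) :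
  all P r -> (forall i, P i -> Q i -> F i = G i) ->
  \big[op/idx]_(i <- r | Q i) F i = \big[op/idx]_(i <- r | Q i) G i.
Proof.
move=> Pr FG; elim: r Pr => [|i r IH] /=; first by rewrite !big_nil.
by case/andP=> Pi Pr; rewrite !big_cons IH //; case: ifP => // /(FG _ Pi) ->.
Qed.

Lemma ler_sum_all (R : numDomainType) (I : Type) (r : seq I) (P Q : pred I) (F G : I -> R) :
  all P r -> (forall i, P i -> Q i -> F i <= G i) ->
  \sum_(i <- r | Q i) F i <= \sum_(i <- r | Q i) G i.
Proof.
move=> Pr FG; elim: r Pr => [|i r IH] /=; first by rewrite !big_nil.
case/andP=> Pi Pr; rewrite !big_cons; case: ifP => Qi; last exact: IH.
by rewrite lerD ?FG ?IH.
Qed.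

Section KilledWalk.
Variables (R : realType) (V : eqType) (adj : V -> seq V) (K : seq V).

Definition killed_step (f : V -> R) (x : V) : R :=
  if x \in K then (deg adj x)%:R^-1 * \sum_(u <- adj x) f u else 0.

Local Notation Pk := killed_step.

Lemma killed_probE n x y :
  killed_prob adj K R n x y = iter n Pk (fun z => (z == y)%:R) x.
Proof.
elim: n x => [|n IH] x //=; rewrite /Pk; case: ifP => // _.
by congr (_ * _); apply: eq_bigr => u _; exact: IH.
Qed.

Lemma iter_killed_step_ge0 n f : (forall x, 0 <= f x) -> forall x, 0 <= iter n Pk f x.
Proof.
move=> f0; elim: n => [|n IH] x //=; rewrite /Pk; case: ifP => // _.
by rewrite mulr_ge0 ?invr_ge0 ?ler0n ?sumr_ge0.
Qed.

Lemma iter_killed_step_le n f g : (forall x, f x <= g x) ->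
  forall x, iter n Pk f x <= iter n Pk g x.
Proof.
move=> fg; elim: n => [|n IH] x //=; rewrite /Pk; case: ifP => // _.
by rewrite ler_wpM2l ?invr_ge0 ?ler0n ?ler_sum.
Qed.

Lemma iter_killed_stepZ n c f x : iter n Pk (fun z => c * f z) x = c * iter n Pk f x.
Proof.
elim: n x => [|n IH] x //=; rewrite /Pk; case: ifP => _; last by rewrite mulr0.
rewrite mulrCA; congr (_ * _); rewrite mulr_sumr; apply: eq_bigr => u _; exact: IH.
Qed.

Lemma iter_killed_step_sum (I : Type) (r : seq I) n (F : I -> V -> R) x :
  iter n Pk (fun z => \sum_(i <- r) F i z) x = \sum_(i <- r) iter n Pk (F i) x.
Proof.
elim: n x => [|n IH] x //=; rewrite /Pk; case: ifP => _; last by rewrite big1.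
rewrite (eq_bigr (fun u => \sum_(i <- r) iter n Pk (F i) u)); last by move=> u _; exact: IH.
by rewrite exchange_big mulr_sumr.
Qed.

Lemma killed_step_le1 f : (forall x, f x <= 1) -> forall x, Pk f x <= 1.
Proof.
move=> f1 x; rewrite /Pk; case: ifP => // _.
have [->|d0] := eqVneq (deg adj x) 0%N; first by rewrite invr0 mul0r.
rewrite ler_pdivrMl ?ltr0n ?lt0n // mulr1 /deg -sum1_size natr_sum.
exact: ler_sum.
Qed.

Definition survival n := iter n Pk (fun x => (x \in K)%:R).

Lemma survival_ge0 n x : 0 <= survival n x.
Proof. by apply: iter_killed_step_ge0 => z; rewrite ler0n. Qed.

Lemma survival_le1 n x : survival n x <= 1.
Proof.
elim: n x => [|n IH] x; first by rewrite /survival /=; case: (x \in K).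
exact: killed_step_le1.
Qed.

Lemma survival_out n x : x \notin K -> survival n x = 0.
Proof. by case: n => [|n] /negbTE xK; rewrite /survival ?iterS /= /Pk xK. Qed.

Lemma survival_succ_le n x : survival n.+1 x <= survival n x.
Proof.
rewrite /survival iterSr; apply: iter_killed_step_le => z.
case zK: (z \in K); last by rewrite /Pk zK.
by apply: killed_step_le1 => u; case: (u \in K).
Qed.

Lemma survival_le m n x : (m <= n)%N -> survival n x <= survival m x.
Proof.
move=> /subnK <-; elim: (n - m)%N => [|k IH] //.
exact: le_trans (survival_succ_le _ _) IH.
Qed.

Lemma survival_path_exit (p : seq V) x :
  path (fun a b => b \in adj a) x p -> last x p \notin K ->
  exists j (d : R), 0 < d /\ survival j x <= 1 - d.
Proof.
elim: p x => [|v p IH] x /=.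
  by move=> _ xK; exists 0%N, 1; rewrite survival_out // subrr ltr01.
case/andP=> xv pv lK; case xK: (x \in K); last first.
  by exists 0%N, 1; rewrite survival_out ?xK // subrr ltr01.
have [j [d [d0 hj]]] := IH v pv lK.
have dx : (0 : R) < (deg adj x)%:R by rewrite ltr0n /deg; case: (adj x) xv.
have sum_le : \sum_(u <- adj x) survival j u <= (deg adj x)%:R - d.
  have -> : (deg adj x)%:R = 1 + (size (rem v (adj x)))%:R :> R.
    by rewrite /deg (perm_size (perm_to_rem xv)) /= -add1n natrD.
  rewrite (perm_big _ (perm_to_rem xv)) big_cons /=.
  suff le_rem : \sum_(u <- rem v (adj x)) survival j u <= (size (rem v (adj x)))%:R by lra.
  by rewrite -sum1_size natr_sum; apply: ler_sum => u _; exact: survival_le1.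
exists j.+1, (d / (deg adj x)%:R); split; first by rewrite divr_gt0.
rewrite /survival iterS /Pk xK -/(survival j).
rewrite (_ : 1 - _ = (deg adj x)%:R^-1 * ((deg adj x)%:R - d)); last by field; rewrite gt_eqF.
by rewrite ler_wpM2l ?invr_ge0 ?ler0n.
Qed.

Lemma survival_sum_shift L N x :
  \sum_(0 <= n < L + N) survival n x =
  \sum_(0 <= n < L) survival n x + iter L Pk (fun z => \sum_(0 <= n < N) survival n z) x.
Proof.
rewrite (big_cat_nat (leq0n L) (leq_addr _ _)) (big_addn 0 (L + N) L) addKn.
rewrite iter_killed_step_sum; congr (_ + _).
by apply: eq_bigr => n _; rewrite /survival addnC iterD.
Qed.

Lemma survival_sum_le_of_exit L (d : R) : 0 < d -> (0 < L)%N ->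
  {in K, forall x, survival L x <= 1 - d} ->
  forall N x, \sum_(0 <= n < N) survival n x <= L%:R / d.
Proof.
move=> d0 L0 exitL.
have Ld : 0 <= L%:R / d by rewrite divr_ge0 ?ler0n ?ltW.
suff sum_kL k x : \sum_(0 <= n < k * L) survival n x <= L%:R / d.
  move=> N x; apply: le_trans (sum_kL N x).
  rewrite (big_cat_nat (leq0n N) (leq_pmulr N L0)) /= lerDl.
  by apply: sumr_ge0 => n _; exact: survival_ge0.
elim: k x => [|k IH] x; first by rewrite big_geq.
case xK: (x \in K); last by rewrite big1 // => n _; rewrite survival_out ?xK.
rewrite mulSn survival_sum_shift.
have head_le : \sum_(0 <= n < L) survival n x <= L%:R.
  rewrite (_ : L%:R = \sum_(0 <= n < L) (1 : R)); last by rewrite sumr_const_nat subn0.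
  by apply: ler_sum => n _; exact: survival_le1.
have tail_le : iter L Pk (fun z => \sum_(0 <= n < k * L) survival n z) x <=
               L%:R / d * survival L x.
  rewrite -iter_killed_stepZ; apply: iter_killed_step_le => z.
  case zK: (z \in K); first by rewrite mulr1; exact: IH.
  by rewrite mulr0 big1 // => n _; rewrite survival_out ?zK.
have := ler_wpM2l Ld (exitL x xK).
rewrite mulrBr mulr1 mulfVK ?gt_eqF //; lra.
Qed.

Lemma killed_prob_ge0 n x y : 0 <= killed_prob adj K R n x y.
Proof. by rewrite killed_probE; apply: iter_killed_step_ge0 => z; rewrite ler0n. Qed.

Lemma killed_prob_le_survival n x y : y \in K -> killed_prob adj K R n x y <= survival n x.
Proof.
move=> yK; rewrite killed_probE; apply: iter_killed_step_le => z.
by case: eqP => [->|_]; rewrite ?yK ?ler0n.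
Qed.

Lemma killed_prob_out n x y : y \in K -> x \notin K -> killed_prob adj K R n x y = 0.
Proof.
move=> yK xK; case: n => [|n] /=; last by rewrite (negbTE xK).
by case: eqP => // xy; rewrite xy yK in xK.
Qed.

End KilledWalk.

Lemma graph_infinite_notin (V : eqType) : graph_infinite V -> forall r : seq V, exists v, v \notin r.
Proof.
move=> Hinf r; apply: contrapT => allin; apply: Hinf; exists r => v.
by apply: contrapT => /negP vr; apply: allin; exists v.
Qed.

Lemma connected_infinite_deg_gt0 (V : eqType) (adj : V -> seq V) :
  graph_connected adj -> graph_infinite V -> forall v, (0 < deg adj v)%N.
Proof.
move=> Hconn Hinf v; have [u uv] := graph_infinite_notin Hinf [:: v].
have [[|a p] [/= vp lastp]] := Hconn v u; first by rewrite lastp mem_seq1 eqxx in uv.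
by case/andP: vp; rewrite /deg; case: (adj v).
Qed.

Section Green.
Variables (R : realType) (V : eqType) (adj : V -> seq V) (K : seq V).

Lemma greenK_ge0 x y : (0 <= greenK adj K R x y)%E.
Proof. by apply: nneseries_ge0 => n _ _; rewrite lee_fin killed_prob_ge0. Qed.

Lemma greenK_harmonic x y : x \in K ->
  greenK adj K R x y = (((x == y)%:R)%:E +
     ((deg adj x)%:R^-1)%:E * \sum_(u <- adj x) greenK adj K R u y)%E.
Proof.
move=> xK; have q0 n z : (0 <= (killed_prob adj K R n z y)%:E)%E.
  by rewrite lee_fin killed_prob_ge0.
rewrite /greenK (@nneseries_recl R xpredT) //; congr (_ + _)%E.
rewrite -(@nneseries_addn R (fun n => (killed_prob adj K R n x y)%:E) 1) //.
rewrite -nneseries_sum // -nneseriesZl; last by move=> n _; apply: sume_ge0.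
apply: congr_lim; apply: funext => N; apply: eq_bigr => n _.
by rewrite addn1 /= xK sumEFin EFinM.
Qed.

Hypotheses (Hconn : graph_connected adj) (Hinf : graph_infinite V).

Lemma survival_uniform_exit (r : seq V) : exists L (d : R),
  [/\ 0 < d, (0 < L)%N & {in r, forall x, survival R adj K L x <= 1 - d}].
Proof.
elim: r => [|a r [L [d [d0 L0 exitL]]]]; first by exists 1%N, 1; rewrite ltr01.
have [v vK] := graph_infinite_notin Hinf K.
have [p [pth lastp]] := Hconn a v.
rewrite -lastp in vK; have [j [e [e0 exitj]]] := survival_path_exit R pth vK.
exists (maxn L j), (Num.min d e); split.
- by rewrite lt_min d0 e0.
- by rewrite (leq_trans L0) ?leq_maxl.
- move=> x; rewrite in_cons => /predU1P [->|xr].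
    apply: le_trans (survival_le R adj K a (leq_maxr L j)) _.
    by apply: le_trans exitj _; rewrite lerB // ge_min lexx orbT.
  apply: le_trans (survival_le R adj K x (leq_maxl L j)) _.
  by apply: le_trans (exitL x xr) _; rewrite lerB // ge_min lexx.
Qed.

Lemma greenK_lty x y : y \in K -> (greenK adj K R x y < +oo)%E.
Proof.
move=> yK; have [L [d [d0 L0 exitL]]] := survival_uniform_exit K.
apply: le_lt_trans (ltry (L%:R / d)); apply: lime_le.
  by apply: is_cvg_nneseries => n _ _; rewrite lee_fin killed_prob_ge0.
apply: nearW => N; rewrite sumEFin lee_fin.
apply: le_trans (survival_sum_le_of_exit d0 L0 exitL N x).
by apply: ler_sum => n _; exact: killed_prob_le_survival.
Qed.

Definition green x y : R := fine (greenK adj K R x y).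

Lemma green_ge0 x y : 0 <= green x y.
Proof. exact/fine_ge0/greenK_ge0. Qed.

Lemma greenKE x y : y \in K -> greenK adj K R x y = (green x y)%:E.
Proof.
by move=> yK; rewrite fineK // ge0_fin_numE ?greenK_ge0 ?greenK_lty.
Qed.

Lemma green_harmonic x y : y \in K -> x \in K ->
  green x y = (x == y)%:R + (deg adj x)%:R^-1 * \sum_(u <- adj x) green u y.
Proof.
move=> yK xK; apply: EFin_inj; rewrite -greenKE // greenK_harmonic //.
by rewrite EFinD EFinM -sumEFin; congr (_ + _ * _)%E; apply: eq_bigr => u _; rewrite greenKE.
Qed.

Lemma green_out x y : y \in K -> x \notin K -> green x y = 0.
Proof.
by move=> yK xK; rewrite /green /greenK eseries0 // => n _ _; rewrite killed_prob_out.
Qed.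

Definition exit_time x : R := \sum_(z <- undup K) green x z.

Lemma exit_time_ge0 x : 0 <= exit_time x.
Proof. by apply: sumr_ge0 => z _; exact: green_ge0. Qed.

Lemma exit_time_out x : x \notin K -> exit_time x = 0.
Proof.
by move=> xK; apply: big1_seq => z /andP[_]; rewrite mem_undup => zK; exact: green_out.
Qed.

Lemma green_le_exit_time x y : y \in K -> green x y <= exit_time x.
Proof.
move=> yK; rewrite /exit_time (bigD1_seq y) ?mem_undup ?undup_uniq //= lerDl.
by apply: sumr_ge0 => z _; exact: green_ge0.
Qed.

Lemma exit_time_harmonic x : x \in K ->
  exit_time x = 1 + (deg adj x)%:R^-1 * \sum_(u <- adj x) exit_time u.
Proof.
move=> xK; rewrite /exit_time.
rewrite (eq_big_seq (fun z => (z == x)%:R * 1 +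
  (deg adj x)%:R^-1 * \sum_(u <- adj x) green u z)); last first.
  by move=> z; rewrite mem_undup => zK; rewrite green_harmonic // eq_sym mulr1.
rewrite big_split /= sum_indicator_seq ?undup_uniq // mem_undup xK mul1r.
by rewrite -mulr_sumr exchange_big.
Qed.

Lemma exit_time_le_sum z : exit_time z <= \sum_(x <- undup K) exit_time x.
Proof.
case zK: (z \in K); last first.
  by rewrite exit_time_out ?zK //; apply: sumr_ge0 => x _; exact: exit_time_ge0.
rewrite (bigD1_seq z) ?mem_undup ?undup_uniq //= lerDl.
by apply: sumr_ge0 => x _; exact: exit_time_ge0.
Qed.

End Green.

Section Walkers.
Variables (V : eqType) (K : seq V).

Definition walkers (st : pstate V) z : nat := (minn (st.1.1 z) (st.1.2 z) + st.2 z)%N.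

Lemma walkers_ghost_step eo ew eg a v z : (0 < eg a)%N -> v != a ->
  (walkers (apply_step K (eo, ew, eg) (GStep a v)) z + (z == a))%N =
  (walkers (eo, ew, eg) z + (z == v))%N.
Proof.
move=> ega /eqP va; rewrite /walkers /= /upd.
by repeat (case: eqP => /= ?; subst); try congruence; lia.
Qed.

Lemma walkers_pair_step eo ew eg b u w z : z \in K ->
  (0 < eo b)%N -> (0 < ew b)%N -> u != b -> w != b ->
  (walkers (apply_step K (eo, ew, eg) (PStep b u w)) z + (z == b))%N =
  (walkers (eo, ew, eg) z + (z == u) * (eo u < ew u) + (z == w) * (ew w <= eo w))%N.
Proof.
move=> zK eob ewb ub wb; rewrite /walkers /= /upd ?eqxx (negbTE wb).
have [->|zb] := eqVneq z b.
  rewrite ?eqxx !(eq_sym b) (negbTE ub) (negbTE wb) /=.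
  by case: ifP => _ /=; rewrite ?(eq_sym b) ?(negbTE wb); lia.
have [<-|zw] := eqVneq z w.
  rewrite ?eqxx zK; have [<-|zu] := eqVneq z u; rewrite ?eqxx /=;
  by case: ifP => /= newghost; rewrite ?eqxx; lia.
by have [<-|zu] := eqVneq z u; case: ifP => _ /=; rewrite ?(negbTE zw); lia.
Qed.

End Walkers.

Section Potential.
Variables (R : realType) (V : eqType) (adj : V -> seq V) (K : seq V).
Hypothesis loopless : forall v, v \notin adj v.

Definition potential (f : V -> R) (st : pstate V) : R :=
  \sum_(x <- undup K) (walkers st x)%:R * f x.

Definition increment (f : V -> R) (st : pstate V) (s : gpstep V) : R :=
  let: (eo, ew, _) := st in
  match s with
  | GStep a v => f v - f a
  | PStep b u w => (eo u < ew u)%:R * f u + (ew w <= eo w)%:R * f w - f b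
  end.

Lemma sum_indicator_undup (g : V -> R) a : (forall z, z \notin K -> g z = 0) ->
  \sum_(x <- undup K) (x == a)%:R * g x = g a.
Proof.
move=> g_out; rewrite sum_indicator_seq ?undup_uniq // mem_undup.
by case aK: (a \in K); rewrite ?mul1r // mul0r g_out ?aK.
Qed.

Lemma neighbour_neq v u : u \in adj v -> u != v.
Proof. by apply: contraTneq => ->; exact: loopless. Qed.

Variable f : V -> R.
Hypothesis f_out : forall z, z \notin K -> f z = 0.

Lemma potential_ghost_step eo ew eg a v : (0 < eg a)%N -> v \in adj a ->
  potential f (apply_step K (eo, ew, eg) (GStep a v)) =
  potential f (eo, ew, eg) + increment f (eo, ew, eg) (GStep a v).
Proof.
move=> ega va; rewrite /potential.
rewrite (eq_bigr (fun x => (walkers (eo, ew, eg) x)%:R * f x +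
                          ((x == v)%:R * f x - (x == a)%:R * f x))); last first.
  move=> x _; have := walkers_ghost_step K eo ew x ega (neighbour_neq va).
  move/(congr1 (GRing.natmul (1 : R))); rewrite !natrD => E.
  by rewrite -mulrBl -mulrDl; congr (_ * _); rewrite addrA -E addrK.
by rewrite big_split /= sumrB !sum_indicator_undup.
Qed.

Lemma potential_pair_step eo ew eg b u w :
  (0 < eo b)%N -> (0 < ew b)%N -> u \in adj b -> w \in adj b ->
  potential f (apply_step K (eo, ew, eg) (PStep b u w)) =
  potential f (eo, ew, eg) + increment f (eo, ew, eg) (PStep b u w).
Proof.
move=> eob ewb ub wb; rewrite /potential.
rewrite (eq_big_seq (fun x => (walkers (eo, ew, eg) x)%:R * f x +
   ((x == u)%:R * ((eo u < ew u)%:R * f x) + (x == w)%:R * ((ew w <= eo w)%:R * f x)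
    - (x == b)%:R * f x))); last first.
  move=> x; rewrite mem_undup => xK.
  have := walkers_pair_step eg xK eob ewb (neighbour_neq ub) (neighbour_neq wb).
  move/(congr1 (GRing.natmul (1 : R))); rewrite !natrD !natrM => E.
  rewrite !mulrA -mulrDl -mulrBl -mulrDl; congr (_ * _).
  by rewrite !addrA -E addrK.
by rewrite big_split /= sumrB big_split /= !sum_indicator_undup // => z zK; rewrite f_out ?mulr0.
Qed.

Lemma sum_options_potential (F : gpstep V -> R -> R) st c : valid_choice K st c ->
  \sum_(s <- options adj c) F s (potential f (apply_step K st s)) =
  \sum_(s <- options adj c) F s (potential f st + increment f st s).
Proof.
case: st => [[eo ew] eg]; case: c => [a|b] /=.
  case/andP => _ ega; rewrite !big_map; apply: eq_big_seq => v va.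
  by rewrite potential_ghost_step.
case/and3P => _ eob ewb; rewrite !big_allpairs_dep; apply: eq_big_seq => u ub.
by apply: eq_big_seq => w wb; rewrite potential_pair_step.
Qed.

End Potential.

Section Drift.
Variables (R : realType) (V : eqType) (adj : V -> seq V).
Hypothesis deg_gt0 : forall v, (0 < deg adj v)%N.

Local Notation w := (step_weight adj R).

Lemma deg_neq0 v : (deg adj v)%:R != 0 :> R.
Proof. by rewrite pnatr_eq0 -lt0n deg_gt0. Qed.

Lemma step_weight_ge0 s : 0 <= w s.
Proof. by case: s => *; rewrite invr_ge0 ?exprn_ge0 ?ler0n. Qed.

Lemma options_weight_sum c : \sum_(s <- options adj c) w s = 1.
Proof.
case: c => [a|b]; rewrite /options.
  rewrite big_map (eq_bigr (fun=> (deg adj a)%:R^-1)) // sumr_const_seq.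
  by rewrite -(mulr_natr (deg adj a)%:R^-1) mulVf ?deg_neq0.
rewrite big_allpairs_dep (eq_bigr (fun=> ((deg adj b)%:R ^+ 2)^-1 *+ deg adj b)).
  rewrite sumr_const_seq -mulrnA -(mulr_natr ((deg adj b)%:R ^+ 2)^-1) natrM -expr2.
  by rewrite mulVf ?expf_neq0 ?deg_neq0.
by move=> u _; rewrite sumr_const_seq.
Qed.

(* As [(eo u < ew u) + (ew u <= eo u) = 1], the oil and the water of a moving
   pair together put one walker at a uniform neighbour; the ghost rule is what
   turns the water's [ew w < eo w] into [ew w <= eo w]. *)
Lemma mean_increment (f : V -> R) st c :
  \sum_(s <- options adj c) w s * increment f st s =
  (deg adj (origin c))%:R^-1 * \sum_(u <- adj (origin c)) f u - f (origin c).
Proof.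
case: st => [[eo ew] eg]; case: c => [a|b] /=.
  rewrite big_map -mulr_sumr sumrB sumr_const_seq -/(deg adj a) -(mulr_natr (f a)).
  by rewrite mulrBr mulrCA mulVf ?deg_neq0 ?mulr1.
have split_pair : \sum_(u <- adj b) (eo u < ew u)%:R * f u +
                  \sum_(u <- adj b) (ew u <= eo u)%:R * f u = \sum_(u <- adj b) f u.
  rewrite -big_split; apply: eq_bigr => u _ /=.
  by rewrite -mulrDl ltnNge; case: (ew u <= eo u)%N; rewrite /= ?add0r ?addr0 mul1r.
rewrite big_allpairs_dep; under eq_bigr do rewrite -mulr_sumr.
rewrite -mulr_sumr -/(deg adj b); set d := (deg adj b)%:R.
rewrite (eq_bigr (fun u => (eo u < ew u)%:R * f u *+ deg adj b +
  \sum_(w <- adj b) (ew w <= eo w)%:R * f w - f b *+ deg adj b)); last first.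
  by move=> u _; rewrite sumrB big_split /= !sumr_const_seq.
have natd x : x *+ deg adj b = x * d by rewrite mulr_natr.
rewrite sumrB big_split /= !sumr_const_seq -/(deg adj b) !sumrMnl !natd -split_pair.
have d0 : d != 0 by exact: deg_neq0.
by clearbody d; field.
Qed.

Lemma increment_sqr_le (f : V -> R) (M : R) st s : (forall z, 0 <= f z <= M) ->
  increment f st s ^+ 2 <= 4 * M ^+ 2.
Proof.
move=> fM; case: st => [[eo ew] eg].
suff [M0 /andP[lo hi]] : 0 <= M /\ - M <= increment f (eo, ew, eg) s <= 2 * M by nra.
case: s => [a v|b u w] /=.
  have /andP[? ?] := fM a; have /andP[? ?] := fM v.
  by split; [lra | apply/andP; split; lra].
have /andP[? ?] := fM b; have /andP[? ?] := fM u; have /andP[? ?] := fM w.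
by case: (_ < _)%N; case: (_ <= _)%N; rewrite /= ?mul1r ?mul0r;
  (split; [lra | apply/andP; split; lra]).
Qed.

End Drift.

Lemma lyapunov_cvg0 (R : realType) (A P B : nat -> R) (C : R) :
  0 <= C -> (forall n, 0 <= P n) -> (forall n, 0 <= A n) -> (forall n, 0 <= B n) ->
  (forall n, A n.+1 = A n - P n) -> (forall n, B n.+1 <= B n - 2 * A n + C * P n) ->
  (A n @[n --> \oo] --> 0)%classic.
Proof.
move=> C0 P0 A0 B0 A_succ B_succ.
(* [B + C A] is a Lyapunov function that drops by [2 A n] at step [n]. *)
have sum_le N : 2 * \sum_(0 <= n < N) A n <= B 0 + C * A 0 - (B N + C * A N).
  elim: N => [|N IH]; first by rewrite big_geq // mulr0 subrr.
  rewrite big_nat_recr //= mulrDr; have := B_succ N; rewrite A_succ mulrBr; lra.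
have A_le n m : (n <= m)%N -> A m <= A n.
  by move=> /subnK <-; elim: (m - n)%N => [|k IH] //; rewrite addSn A_succ; have := P0 (k + n)%N; lra.
set Z := (B 0 + C * A 0) / 2.
have NA_le N : N%:R * A N <= Z.
  have : N%:R * A N <= \sum_(0 <= n < N) A n.
    rewrite -[N in N%:R](subn0 N) -sumr_const_nat mulr_suml.
    by apply: ler_sum_nat => n /andP[_ nN]; rewrite mul1r A_le // ltnW.
  have := sum_le N; have := B0 N; have := mulr_ge0 C0 (A0 N); rewrite /Z; lra.
apply/cvgrPdist_le => e e0; have Z0 : 0 <= Z by apply: le_trans (NA_le 0%N); rewrite mul0r.
have [k Zk] : exists k : nat, Z / e < k%:R.
  by exists (Num.Def.archi_bound (Z / e)); apply: archi_boundP; rewrite divr_ge0 // ltW.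
exists k.+1 => // N /= kN; rewrite sub0r normrN ger0_norm //.
have N0 : (0 : R) < N%:R by rewrite ltr0n (leq_trans _ kN).
rewrite -(ler_pM2l N0); apply: le_trans (NA_le N) _.
rewrite -ler_pdivrMr //; apply/ltW/(lt_le_trans Zk); rewrite ler_nat; exact: ltnW.
Qed.

Section Process.
Variables (R : realType) (V : eqType) (adj : V -> seq V) (K : seq V).
Variables (so sw : V -> nat) (strat : seq (gpstep V) -> gpchoice V).
Hypothesis loopless : forall v, v \notin adj v.
Hypothesis deg_gt0 : forall v, (0 < deg adj v)%N.
Hypothesis Hstrat : valid_strategy adj K so sw strat.

Local Notation hist := (hist adj K so sw strat).
Local Notation state := (state_of K so sw).
Local Notation prob := (hist_prob adj R).
Local Notation w := (step_weight adj R).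
Local Notation alive h := (~~ terminal K (state h)).

Definition expectation n (F : pstate V -> R) : R := \sum_(h <- hist n) prob h * F (state h).

Definition alive_prob n : R := \sum_(h <- hist n | alive h) prob h.

Lemma hist_prob_ge0 h : 0 <= prob h.
Proof. by apply: prodr_ge0 => s _; exact: step_weight_ge0. Qed.

Lemma alive_prob_ge0 n : 0 <= alive_prob n.
Proof. by apply: sumr_ge0 => h _; exact: hist_prob_ge0. Qed.

Lemma expectation_ge0 n F : (forall st, 0 <= F st) -> 0 <= expectation n F.
Proof. by move=> F0; apply: sumr_ge0 => h _; rewrite mulr_ge0 ?hist_prob_ge0. Qed.

Lemma expectation_le n F G : (forall st, F st <= G st) -> expectation n F <= expectation n G.
Proof. by move=> FG; apply: ler_sum => h _; rewrite ler_wpM2l ?hist_prob_ge0. Qed.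

Lemma expectation_succ n F : expectation n.+1 F =
  \sum_(h <- hist n | alive h) prob h *
     \sum_(s <- options adj (strat h)) w s * F (apply_step K (state h) s).
Proof.
rewrite /expectation /= big_flatten /= big_map big_filter; apply: eq_bigr => h _.
rewrite big_map mulr_sumr; apply: eq_bigr => s _.
by rewrite /hist_prob big_cons /= mulrCA mulrA.
Qed.

Lemma expectation_alive n F : (forall st, terminal K st -> F st = 0) ->
  expectation n F = \sum_(h <- hist n | alive h) prob h * F (state h).
Proof.
move=> F0; rewrite /expectation [RHS]big_mkcond; apply: eq_bigr => h _.
by case: ifP => // /negbFE /F0 ->; rewrite mulr0.
Qed.

Lemma potential_terminal (f : V -> R) st : terminal K st -> potential K f st = 0.
Proof.
case: st => [[eo ew] eg] /allP term; rewrite /potential big_seq big1 // => x.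
by rewrite mem_undup => /term /andP[/eqP m0 /eqP g0]; rewrite /walkers /= m0 g0 mul0r.
Qed.

Lemma origin_valid st c : valid_choice K st c -> origin c \in K.
Proof. by case: st => [[eo ew] eg]; case: c => [a|b] /=; [case/andP | case/and3P]. Qed.

Variable f : V -> R.
Hypothesis f_out : forall z, z \notin K -> f z = 0.
Variable source : V -> R.
Hypothesis f_harmonic : forall b, b \in K ->
  f b = source b + (deg adj b)%:R^-1 * \sum_(u <- adj b) f u.

Lemma mean_increment_valid st c : valid_choice K st c ->
  \sum_(s <- options adj c) w s * increment f st s = - source (origin c).
Proof.
by move=> vc; rewrite mean_increment // (f_harmonic (origin_valid vc)); ring.
Qed.

Lemma expectation_potential_succ n :
  expectation n.+1 (potential K f) =
  expectation n (potential K f) - \sum_(h <- hist n | alive h) prob h * source (origin (strat h)).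
Proof.
rewrite expectation_succ (expectation_alive n (@potential_terminal f)) -sumrB.
apply: (eq_big_all _ _ (Hstrat n)) => h /orP[->//|vc] _.
rewrite (sum_options_potential loopless f_out (fun s x => w s * x) vc) /=.
under eq_bigr do rewrite mulrDr.
rewrite big_split /= -mulr_suml options_weight_sum // mul1r.
by rewrite mean_increment_valid // mulrDr mulrN.
Qed.

Lemma expectation_potential_sqr_succ n (M : R) :
  (forall b, b \in K -> source b = 1) -> (forall z, 0 <= f z <= M) ->
  expectation n.+1 (fun st => potential K f st ^+ 2) <=
  expectation n (fun st => potential K f st ^+ 2) - 2 * expectation n (potential K f)
  + 4 * M ^+ 2 * alive_prob n.
Proof.
move=> source1 fM.
rewrite expectation_succ (expectation_alive n (@potential_terminal f)).
rewrite (expectation_alive n (F := fun st => potential K f st ^+ 2)); last first.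
  by move=> st /(potential_terminal f) ->; rewrite expr0n.
rewrite /alive_prob mulr_sumr mulr_sumr -sumrB -big_split /=.
apply: (ler_sum_all (Hstrat n)) => h /orP[->//|vc] _.
rewrite (sum_options_potential loopless f_out (fun s x => w s * x ^+ 2) vc) /=.
set p := potential K f (state h).
under eq_bigr do rewrite sqrrD mulrDr mulrDr.
rewrite !big_split /= -mulr_suml options_weight_sum // mul1r.
have sum_cross : \sum_(s <- options adj (strat h)) w s * (p * increment f (state h) s *+ 2) =
                 - 2 * p.
  rewrite (eq_bigr (fun s => 2 * p * (w s * increment f (state h) s))); last first.
    by move=> s _; rewrite -mulr_natl; ring.
  by rewrite -mulr_sumr mean_increment_valid // source1 ?(origin_valid vc) // mulrN1 mulNr.
have sum_sqr : \sum_(s <- options adj (strat h)) w s * increment f (state h) s ^+ 2 <=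
               4 * M ^+ 2.
  apply: le_trans (_ : _ <= \sum_(s <- options adj (strat h)) w s * (4 * M ^+ 2)) _.
    apply: ler_sum => s _; apply: ler_wpM2l; [exact: step_weight_ge0 | exact: increment_sqr_le].
  by rewrite -mulr_suml options_weight_sum // mul1r.
rewrite sum_cross; have := ler_wpM2l (hist_prob_ge0 h) sum_sqr; lra.
Qed.

End Process.

Section Stabilization.
Variables (R : realType) (V : eqType) (adj : V -> seq V) (K : seq V).
Variables (so sw : V -> nat) (strat : seq (gpstep V) -> gpchoice V).
Hypotheses (Hconn : graph_connected adj) (Hinf : graph_infinite V).
Hypothesis loopless : forall v, v \notin adj v.
Hypothesis Hstrat : valid_strategy adj K so sw strat.

Local Notation E := (expectation adj K so sw strat).
Local Notation deg_gt0 := (connected_infinite_deg_gt0 Hconn Hinf).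
Local Notation T := (exit_time R adj K).

Lemma exit_potential_cvg0 : (E n (potential K T) @[n --> \oo] --> 0)%classic.
Proof.
set M := \sum_(x <- undup K) T x.
have TM z : 0 <= T z <= M by rewrite exit_time_ge0 exit_time_le_sum.
have T_out z : z \notin K -> T z = 0 by exact: exit_time_out.
have T_harmonic := exit_time_harmonic R (K := K) Hconn Hinf.
apply: (@lyapunov_cvg0 _ _ (alive_prob R adj K so sw strat)
          (fun n => E n (fun st => potential K T st ^+ 2)) (4 * M ^+ 2)).
- by rewrite mulr_ge0 ?sqr_ge0.
- exact: alive_prob_ge0.
- by move=> n; apply: expectation_ge0 => st; apply: sumr_ge0 => x _; rewrite mulr_ge0 ?exit_time_ge0.
- by move=> n; apply: expectation_ge0 => st; exact: sqr_ge0.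
- move=> n; rewrite (expectation_potential_succ loopless deg_gt0 Hstrat T_out T_harmonic).
  by under eq_bigr do rewrite mulr1.
- by move=> n; exact: (expectation_potential_sqr_succ loopless deg_gt0 Hstrat T_out T_harmonic).
Qed.

Lemma expectation0_potential (f : V -> R) :
  E 0 (potential K f) = \sum_(x <- undup K) (minn (so x) (sw x))%:R * f x.
Proof.
rewrite /expectation big_seq1 /hist_prob big_nil mul1r.
by apply: eq_bigr => x _; rewrite /walkers addn0.
Qed.

Variables (y : V) (yK : y \in K).

Local Notation G := (fun x => green R adj K x y).

Definition jump_prob n : R :=
  \sum_(h <- hist adj K so sw strat n |
        ~~ terminal K (state_of K so sw h) && (origin (strat h) == y))
     hist_prob adj R h.

Lemma jump_prob_partial_sum N :
  \sum_(0 <= n < N) jump_prob n = E 0 (potential K G) - E N (potential K G).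
Proof.
elim: N => [|N IH]; first by rewrite big_geq // subrr.
have G_out z : z \notin K -> G z = 0 by exact: green_out.
have G_harmonic b : b \in K -> G b = (b == y)%:R + (deg adj b)%:R^-1 * \sum_(u <- adj b) G u.
  exact: green_harmonic.
rewrite big_nat_recr //= IH (expectation_potential_succ loopless deg_gt0 Hstrat G_out G_harmonic).
rewrite /jump_prob big_mkcondr /=.
rewrite (eq_bigr (fun h => hist_prob adj R h * (origin (strat h) == y)%:R)); first ring.
by move=> h _; case: eqP; rewrite ?mulr1 ?mulr0.
Qed.

Lemma green_potential_cvg0 : (E n (potential K G) @[n --> \oo] --> 0)%classic.
Proof.
apply: (@squeeze_cvgr _ _ _ _ (fun=> 0) _ _ _ 0 _ exit_potential_cvg0).
  apply: nearW => n; rewrite expectation_ge0 ?expectation_le // => st.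
    by apply: ler_sum => x _; rewrite ler_wpM2l ?ler0n ?green_le_exit_time.
  by apply: sumr_ge0 => x _; rewrite mulr_ge0 ?green_ge0.
exact: (@cvg_cst _ 0 _ _ eventually_filter).
Qed.

Lemma jump_prob_series_cvg :
  ((\sum_(0 <= n < N) jump_prob n) @[N --> \oo] -->
   \sum_(x <- undup K) (minn (so x) (sw x))%:R * green R adj K x y)%classic.
Proof.
rewrite -expectation0_potential (funext jump_prob_partial_sum).
rewrite -[X in (_ --> X)%classic]subr0.
by apply: cvgB; [exact: (@cvg_cst _ _ _ _ eventually_filter) | exact: green_potential_cvg0].
Qed.

End Stabilization.

Theorem lemma3p3 (R : realType) (V : eqType) (adj : V -> seq V)
  (Hsimple : graph_simple adj) (Hconn : graph_connected adj)
  (Hinf : graph_infinite V) (Htrans : vertex_transitive adj)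
  (K : seq V) (y : V) (Hy : y \in K)
  (so sw : V -> nat) (Hunst : exists x : V, (0 < minn (so x) (sw x))%N)
  (strat : seq (gpstep V) -> gpchoice V)
  (Hstrat : valid_strategy adj K so sw strat) :
  expected_jumps_from adj K so sw strat R y =
  (\sum_(x <- undup K)
     ((minn (so x) (sw x))%:R)%:E * greenK adj K R x y)%E.
Proof.
have loopless : forall v, v \notin adj v by case: Hsimple => _ [].
have jumps_cvg := jump_prob_series_cvg (R := R) Hconn Hinf loopless Hstrat Hy.
rewrite /expected_jumps_from (eq_bigr _ (fun x _ => congr1 _ (greenKE R Hconn Hinf x Hy))).
rewrite sumEFin -(cvg_lim _ jumps_cvg) // -EFin_lim; last exact: cvgP jumps_cvg.
by congr (limn _); apply: funext => N /=; rewrite sumEFin.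
Qed.
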